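(* For every two integers $m,n\ge2$ there exists a mapping $h_m^n:\mathbb Z_m^n\to\{0,\ldots,4m\}^{2n}$ such that for every $q\in[2,\infty)$ and every $x,y\in\mathbb Z_m^n$, $$m\Big(\sum_{j=1}^n\big|e^{2\pi ix_j/m}-e^{2\pi iy_j/m}\big|^q\Big)^{1/q}\le\|h_m^n(x)-h_m^n(y)\|_q\le 3m\Big(\sum_{j=1}^n\big|e^{2\pi ix_j/m}-e^{2\pi iy_j/m}\big|^q\Big)^{1/q},$$ where $\|\cdot\|_q$ is the $\ell_q$ norm on $\mathbb R^{2n}$.
   Context: $\mathbb Z_m^n=(\mathbb Z/m\mathbb Z)^n$; the expression $e^{2\pi i x_j/m}$ is well defined for $x_j\in\mathbb Z/m\mathbb Z$. *)

From Stdlib Require Import Reals.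
From mathcomp Require Import all_boot.
Set Implicit Arguments.
Local Open Scope R_scope.
Unset Strict Implicit.
Unset Printing Implicit Defensive.

(* Real power x^y for x >= 0, with the convention 0^y = 0 (y > 0);
   Stdlib's Rpower 0 y would be 1, which is why we patch it. *)
Definition rpow (x y : R) : R :=
  if Req_EM_T x 0 then R0 else Rpower x y.

Definition cdist (m a b : nat) : R :=
  let ta := (2 * PI * INR a / INR m) in
  let tb := (2 * PI * INR b / INR m) in
  sqrt ((cos ta - cos tb) ^ 2 + (sin ta - sin tb) ^ 2).

Definition lqnorm (q : R) (k : nat) (v : 'I_k -> R) : R :=
  rpow (\big[Rplus/R0]_(j < k) rpow (Rabs (v j)) q) (/ q).

From Stdlib Require Import Reals Lra Lia Psatz ZArith.
From mathcomp Require Import all_boot.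
From HB Require Import structures.
Local Open Scope R_scope.

(* Each coordinate a of Z_m is sent to the pair of integers
   floor(2m(1 + cos(2 pi a/m))), floor(2m(1 + sin(2 pi a/m))), i.e. the point
   e^{2 pi i a/m} scaled by 2m, translated into the first quadrant and rounded.
   Rounding moves each entry by less than 1, and distinct m-th roots of unity
   are at distance at least 2 sin(pi/m) >= 5/(2m); so for a != b the scaled
   difference (p, r) has length 2X with X = m|e(a) - e(b)| >= 5/2, and the
   rounded difference (u, v) satisfies max(|u|, |v|) >= X (otherwise
   p^2 + r^2 < 2(X+1)^2 <= 4X^2) and |(u, v)| <= 2X + sqrt 2 <= 3X.  For q >= 2,
   |u|^q + |v|^q lies between max(|u|,|v|)^q and |(u, v)|^q, and summing over
   the n coordinates gives both inequalities. *)

Lemma rpow_ge0 x y : 0 <= rpow x y.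
Proof.
rewrite /rpow; destruct (Req_EM_T x 0); [apply: Rle_refl | left; apply: exp_pos].
Qed.

Lemma rpow0 y : rpow 0 y = 0.
Proof. by rewrite /rpow; destruct (Req_EM_T 0 0). Qed.

Lemma rpow_Rpower x y : 0 < x -> rpow x y = Rpower x y.
Proof. by move=> hx; rewrite /rpow; destruct (Req_EM_T x 0) => //; lra. Qed.

Lemma rpow_le x z y : 0 <= y -> 0 <= x <= z -> rpow x y <= rpow z y.
Proof.
move=> hy [[hx|<-] hxz]; last by rewrite rpow0; apply: rpow_ge0.
rewrite !rpow_Rpower; try lra.
by apply: Rle_Rpower_l; lra.
Qed.

Lemma rpow_mul x z y : 0 <= x -> 0 <= z -> rpow (x * z) y = rpow x y * rpow z y.
Proof.
move=> [hx|<-] [hz|<-]; rewrite ?Rmult_0_l ?Rmult_0_r ?rpow0 ?Rmult_0_l ?Rmult_0_r //.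
by rewrite !rpow_Rpower ?Rpower_mult_distr //; nra.
Qed.

Lemma rpowK x y : 0 <= x -> y <> 0 -> rpow (rpow x y) (/ y) = x.
Proof.
move=> [hx|<-] hy; last by rewrite !rpow0.
rewrite (rpow_Rpower x y hx) rpow_Rpower; last by apply: exp_pos.
by rewrite Rpower_mult Rinv_r // Rpower_1.
Qed.

Lemma rpow_sqr_mul x y : 0 <= x -> rpow x y = x ^ 2 * rpow x (y - 2).
Proof.
move=> [hx|<-]; last by rewrite !rpow0; ring.
rewrite !rpow_Rpower // -(Rpower_pow 2 x hx) -Rpower_plus.
by congr Rpower; simpl; ring.
Qed.

Lemma Rabs_le_norm2 u v : Rabs u <= sqrt (u ^ 2 + v ^ 2).
Proof. by rewrite -sqrt_Rsqr_abs; apply: sqrt_le_1_alt; rewrite /Rsqr; nra. Qed.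

(* |u|^q = u^2 |u|^(q-2) <= u^2 |(u,v)|^(q-2), and likewise for v. *)
Lemma rpow_abs_add_le_norm2 u v q : 2 <= q ->
  rpow (Rabs u) q + rpow (Rabs v) q <= rpow (sqrt (u ^ 2 + v ^ 2)) q.
Proof.
move=> hq; set E := sqrt (u ^ 2 + v ^ 2).
have hE2 : E ^ 2 = u ^ 2 + v ^ 2 by rewrite /E pow2_sqrt //; nra.
have hE0 : 0 <= E by apply: sqrt_pos.
have hu : rpow (Rabs u) (q - 2) <= rpow E (q - 2).
  by apply: rpow_le; [lra | split; [exact: Rabs_pos | exact: Rabs_le_norm2]].
have hv : rpow (Rabs v) (q - 2) <= rpow E (q - 2).
  by apply: rpow_le; [lra | split; [exact: Rabs_pos | rewrite /E Rplus_comm; exact: Rabs_le_norm2]].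
rewrite (rpow_sqr_mul _ q (Rabs_pos u)) (rpow_sqr_mul _ q (Rabs_pos v)) (rpow_sqr_mul _ q hE0).
rewrite !pow2_abs hE2.
have := rpow_ge0 (Rabs u) (q - 2); have := rpow_ge0 (Rabs v) (q - 2); nra.
Qed.

Definition angle (m a : nat) : R := 2 * PI * INR a / INR m.

Lemma cdist_sym m a b : cdist m a b = cdist m b a.
Proof. by rewrite /cdist; congr sqrt; ring. Qed.

Lemma cdist_ge0 m a b : 0 <= cdist m a b.
Proof. exact: sqrt_pos. Qed.

Lemma cdist_chord m a b :
  cdist m a b = 2 * Rabs (sin ((angle m a - angle m b) / 2)).
Proof.
rewrite /cdist -/(angle m a) -/(angle m b).
set A := angle m a; set B := angle m b.
have -> : (cos A - cos B) ^ 2 + (sin A - sin B) ^ 2 = Rsqr (2 * sin ((A - B) / 2)).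
  have h := cos_2a_sin ((A - B) / 2).
  rewrite (_ : 2 * ((A - B) / 2) = A - B) in h; last by field.
  rewrite cos_minus in h.
  by have := sin2_cos2 A; have := sin2_cos2 B; rewrite /Rsqr in h * => *; nra.
by rewrite sqrt_Rsqr_abs Rabs_mult (Rabs_pos_eq 2) //; lra.
Qed.

(* For m >= 3 this is the Taylor bound sin y >= y - y^3/6 at y = pi/m <= 4/3. *)
Lemma m_sin_PI_div_ge m : (2 <= m)%N -> 5 / 4 <= INR m * sin (PI / INR m).
Proof.
move=> hm; have hpi3 := PI2_3_2; have hpi4 := PI_4.
have [->|hm2] := eqVneq m 2%N.
  by rewrite (_ : PI / INR 2 = PI / 2); [rewrite sin_PI2 /=; lra | simpl; field].
have hm3 : 3 <= INR m.
  by rewrite (_ : 3 = INR 3); [apply: le_INR; apply/leP; rewrite ltn_neqAle eq_sym hm2 | simpl; ring].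
set y := PI / INR m.
have hym : y * INR m = PI by rewrite /y; field; lra.
have hy0 : 0 <= y by rewrite /y; apply: Rmult_le_pos; [lra | left; apply: Rinv_0_lt_compat; lra].
have hy1 : y <= 4 / 3 by apply: (Rmult_le_reg_r (INR m)); [lra | rewrite hym; nra].
have [hsin _] := sin_bound y 0 hy0 ltac:(lra).
rewrite /sin_approx /sin_term /= in hsin; nra.
Qed.

Lemma cdist_neq_ge m a b : (2 <= m)%N -> (a < m)%N -> (b < m)%N -> a <> b ->
  5 / 2 <= INR m * cdist m a b.
Proof.
move=> hm; wlog hba : a b / (b < a)%N => [hwlog ha hb hab|ha _ _].
  have [hlt|hgt|heq] := ltngtP a b; last by case: hab.
    by rewrite cdist_sym; apply: hwlog => // /esym.
  exact: hwlog.
have hpi3 := PI2_3_2; have hpi4 := PI_4.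
have hm2 : 2 <= INR m by rewrite (_ : 2 = INR 2) //; apply: le_INR; apply/leP.
have ham : INR a + 1 <= INR m by rewrite -S_INR; apply: le_INR; apply/leP.
have hab : INR b + 1 <= INR a by rewrite -S_INR; apply: le_INR; apply/leP.
have hb0 := pos_INR b.
rewrite cdist_chord.
set z := (angle m a - angle m b) / 2; set y := PI / INR m.
have hym : y * INR m = PI by rewrite /y; field; lra.
have hzm : z * INR m = PI * (INR a - INR b) by rewrite /z /angle; field; lra.
have hy0 : 0 < y by rewrite /y; apply: Rdiv_lt_0_compat; lra.
have hy2 : y <= PI / 2 by apply: (Rmult_le_reg_r (INR m)); [lra | rewrite hym; nra].
have hyz : y <= z by apply: (Rmult_le_reg_r (INR m)); [lra | rewrite hym hzm; nra].
have hzy : z <= PI - y.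
  by apply: (Rmult_le_reg_r (INR m)); [lra | rewrite Rmult_minus_distr_r hym hzm; nra].
have hsin : sin y <= sin z.
  have [hz2|hz2] := Rle_lt_dec z (PI / 2); first by apply: sin_incr_1; lra.
  by rewrite -(sin_PI_x z); apply: sin_incr_1; lra.
have hsz : 0 <= sin z by apply: sin_ge_0; lra.
have := m_sin_PI_div_ge _ hm; rewrite -/y Rabs_pos_eq //; nra.
Qed.

Definition floor_nat (r : R) : nat := Z.to_nat (Int_part r).

Lemma floor_nat_spec r : 0 <= r -> INR (floor_nat r) <= r < INR (floor_nat r) + 1.
Proof.
move=> hr; have [h1 h2] := base_Int_part r.
have hz : (0 <= Int_part r)%Z.
  suff : (-1 < Int_part r)%Z by lia.
  by apply: lt_IZR; lra.
by rewrite /floor_nat INR_IZR_INZ Z2Nat.id //; lra.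
Qed.

Definition grid (m : nat) (t : R) : nat := floor_nat (2 * INR m * (1 + t)).

Lemma grid_le m t : -1 <= t <= 1 -> (grid m t <= 4 * m)%N.
Proof.
move=> ht; have hm := pos_INR m.
have [hfl _] := floor_nat_spec (2 * INR m * (1 + t)) ltac:(nra).
by apply/leP; apply: INR_le; rewrite /grid -multE mult_INR /=; nra.
Qed.

Lemma grid_sub_approx m s t : -1 <= s <= 1 -> -1 <= t <= 1 ->
  Rabs (INR (grid m s) - INR (grid m t) - 2 * INR m * (s - t)) < 1.
Proof.
move=> hs ht; have hm := pos_INR m.
have := floor_nat_spec (2 * INR m * (1 + s)) ltac:(nra).
have := floor_nat_spec (2 * INR m * (1 + t)) ltac:(nra).
by rewrite /grid; split_Rabs; lra.
Qed.

Section PerturbedPair.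

Variables (X p r u v : R).
Hypotheses (hX : 5 / 2 <= X) (hpr : p ^ 2 + r ^ 2 = 4 * X ^ 2)
  (hu : Rabs (u - p) < 1) (hv : Rabs (v - r) < 1).

(* Otherwise p^2 + r^2 < 2 (X + 1)^2, which is below 4 X^2 as soon as X > 1 + sqrt 2. *)
Lemma perturbed_pair_max_ge : X <= Rabs u \/ X <= Rabs v.
Proof.
have [|hu'] := Rle_lt_dec X (Rabs u); first by left.
have [|hv'] := Rle_lt_dec X (Rabs v); first by right.
have hp : p ^ 2 < (X + 1) ^ 2 by split_Rabs; nra.
have hr : r ^ 2 < (X + 1) ^ 2 by split_Rabs; nra.
nra.
Qed.

Lemma perturbed_pair_norm_le : sqrt (u ^ 2 + v ^ 2) <= 3 * X.
Proof.
have hp : Rabs p <= 2 * X.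
  by rewrite -(Rabs_pos_eq (2 * X)); [apply: Rsqr_le_abs_0; rewrite /Rsqr; nra | lra].
have hr : Rabs r <= 2 * X.
  by rewrite -(Rabs_pos_eq (2 * X)); [apply: Rsqr_le_abs_0; rewrite /Rsqr; nra | lra].
have hu2 : u ^ 2 <= p ^ 2 + 2 * Rabs p + 1 by split_Rabs; nra.
have hv2 : v ^ 2 <= r ^ 2 + 2 * Rabs r + 1 by split_Rabs; nra.
rewrite -(sqrt_pow2 (3 * X)); last lra.
by apply: sqrt_le_1_alt; nra.
Qed.

Lemma perturbed_pair_rpow_bounds q : 2 <= q ->
  rpow X q <= rpow (Rabs u) q + rpow (Rabs v) q <= rpow (3 * X) q.
Proof.
move=> hq; have hu0 := rpow_ge0 (Rabs u) q; have hv0 := rpow_ge0 (Rabs v) q.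
have hX0 : 0 <= X by lra.
split.
  have [h|h] := perturbed_pair_max_ge.
    by have := rpow_le _ _ q ltac:(lra) (conj hX0 h); lra.
  by have := rpow_le _ _ q ltac:(lra) (conj hX0 h); lra.
eapply Rle_trans; first exact: rpow_abs_add_le_norm2.
by apply: rpow_le; [lra | split; [apply: sqrt_pos | apply: perturbed_pair_norm_le]].
Qed.

End PerturbedPair.

Definition grid_cos (m a : nat) : nat := grid m (cos (angle m a)).
Definition grid_sin (m a : nat) : nat := grid m (sin (angle m a)).

Lemma grid_pair_rpow_bounds m a b q :
  (2 <= m)%N -> (a < m)%N -> (b < m)%N -> 2 <= q ->
  rpow (INR m * cdist m a b) q <=
    rpow (Rabs (INR (grid_cos m a) - INR (grid_cos m b))) q +
    rpow (Rabs (INR (grid_sin m a) - INR (grid_sin m b))) q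
  <= rpow (3 * (INR m * cdist m a b)) q.
Proof.
move=> hm ha hb hq; have [<-|/eqP hab] := eqVneq a b.
  rewrite cdist_chord !Rminus_diag Rabs_R0 /Rdiv Rmult_0_l sin_0 Rabs_R0 !Rmult_0_r !rpow0.
  by rewrite Rplus_0_r; split; apply: Rle_refl.
set p := 2 * INR m * (cos (angle m a) - cos (angle m b)).
set r := 2 * INR m * (sin (angle m a) - sin (angle m b)).
apply: (perturbed_pair_rpow_bounds _ p r) hq.
- exact: cdist_neq_ge.
- rewrite /cdist -/(angle m a) -/(angle m b) Rpow_mult_distr pow2_sqrt /p /r; first ring.
  by apply: Rplus_le_le_0_compat; apply: pow2_ge_0.
- exact: grid_sub_approx (COS_bound _) (COS_bound _).
- exact: grid_sub_approx (SIN_bound _) (SIN_bound _).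
Qed.

HB.instance Definition _ := Monoid.isComLaw.Build R R0 Rplus
  (fun a b c => esym (Rplus_assoc a b c)) Rplus_comm Rplus_0_l.

Lemma big_Rplus_ge0 k (F : 'I_k -> R) :
  (forall i, 0 <= F i) -> 0 <= \big[Rplus/R0]_(i < k) F i.
Proof. by move=> hF; apply: (big_ind (fun a => 0 <= a)) => // *; [apply: Rle_refl | lra]. Qed.

Lemma big_Rplus_le k (F G : 'I_k -> R) :
  (forall i, F i <= G i) -> \big[Rplus/R0]_(i < k) F i <= \big[Rplus/R0]_(i < k) G i.
Proof. by move=> hFG; apply: (big_ind2 (fun a b => a <= b)) => // *; [apply: Rle_refl | lra]. Qed.

Lemma big_Rplus_mull k (F : 'I_k -> R) c :
  c * \big[Rplus/R0]_(i < k) F i = \big[Rplus/R0]_(i < k) (c * F i).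
Proof.
by apply: (big_ind2 (fun a b => c * a = b)) => [|? ? ? ? <- <-|//]; ring.
Qed.

Lemma mul_lqnorm q c k (f : 'I_k -> R) : q <> 0 -> 0 <= c ->
  c * lqnorm q f = rpow (rpow c q * \big[Rplus/R0]_(i < k) rpow (Rabs (f i)) q) (/ q).
Proof.
move=> hq hc; rewrite rpow_mul ?rpowK //; first exact: rpow_ge0.
by apply: big_Rplus_ge0 => i; apply: rpow_ge0.
Qed.

Lemma lqnorm_ge_mul q c k l (f : 'I_k -> R) (g : 'I_l -> R) : 0 < q -> 0 <= c ->
  rpow c q * \big[Rplus/R0]_(i < k) rpow (Rabs (f i)) q <=
    \big[Rplus/R0]_(i < l) rpow (Rabs (g i)) q ->
  c * lqnorm q f <= lqnorm q g.
Proof.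
move=> hq hc hfg; rewrite mul_lqnorm; try lra.
apply: rpow_le; first by left; apply: Rinv_0_lt_compat.
split=> //; apply: Rmult_le_pos; first exact: rpow_ge0.
by apply: big_Rplus_ge0 => i; apply: rpow_ge0.
Qed.

Lemma lqnorm_le_mul q c k l (f : 'I_k -> R) (g : 'I_l -> R) : 0 < q -> 0 <= c ->
  \big[Rplus/R0]_(i < l) rpow (Rabs (g i)) q <=
    rpow c q * \big[Rplus/R0]_(i < k) rpow (Rabs (f i)) q ->
  lqnorm q g <= c * lqnorm q f.
Proof.
move=> hq hc hgf; rewrite mul_lqnorm; try lra.
apply: rpow_le; first by left; apply: Rinv_0_lt_compat.
by split=> //; apply: big_Rplus_ge0 => i; apply: rpow_ge0.
Qed.

Lemma mul2n_addnn n : (2 * n = n + n)%N.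
Proof. by rewrite mul2n addnn. Qed.

Definition embedding (m n : nat) (x : 'I_n -> 'I_m) (k : 'I_(2 * n)) : nat :=
  match split (cast_ord (mul2n_addnn n) k) with
  | inl j => grid_cos m (x j)
  | inr j => grid_sin m (x j)
  end.

Lemma embedding_le m n x k : (embedding m n x k <= 4 * m)%N.
Proof.
by rewrite /embedding; case: split => j; apply: grid_le; [apply: COS_bound | apply: SIN_bound].
Qed.

Lemma big_embedding m n (F : nat -> nat -> R) (x y : 'I_n -> 'I_m) :
  \big[Rplus/R0]_(k < 2 * n) F (embedding m n x k) (embedding m n y k) =
  \big[Rplus/R0]_(j < n) (F (grid_cos m (x j)) (grid_cos m (y j)) +
                          F (grid_sin m (x j)) (grid_sin m (y j))).
Proof.
rewrite (reindex (cast_ord (esym (mul2n_addnn n)))) /=; last first.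
  by exists (cast_ord (mul2n_addnn n)) => k _; [apply: cast_ordKV | apply: cast_ordK].
rewrite big_split_ord big_split /=.
by congr Rplus; apply: eq_bigr => j _; rewrite /embedding cast_ordKV
  ?(unsplitK (inl j) : split (lshift n j) = inl j) ?(unsplitK (inr j) : split (rshift n j) = inr j).
Qed.

Theorem mainTheorem7 (m n : nat) (hm : (2 <= m)%N) (hn : (2 <= n)%N) :
  exists h : ('I_n -> 'I_m) -> 'I_((2 * n)%N) -> nat,
    (forall x k, (h x k <= 4 * m)%N) /\
    (forall (q : R) (x y : 'I_n -> 'I_m), 2 <= q ->
       INR m * lqnorm q (fun j : 'I_n => cdist m (x j) (y j))
          <= lqnorm q (fun k : 'I_((2 * n)%N) => INR (h x k) - INR (h y k))
          <= 3 * INR m * lqnorm q (fun j : 'I_n => cdist m (x j) (y j))).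
Proof.
exists (embedding m n); split; first exact: embedding_le.
move=> q x y hq; have hm0 := pos_INR m.
have hpair (j : 'I_n) :
  let d := rpow (Rabs (cdist m (x j) (y j))) q in
  rpow (INR m) q * d <=
    rpow (Rabs (INR (grid_cos m (x j)) - INR (grid_cos m (y j)))) q +
    rpow (Rabs (INR (grid_sin m (x j)) - INR (grid_sin m (y j)))) q
  <= rpow (3 * INR m) q * d.
  have hd := cdist_ge0 m (x j) (y j).
  rewrite /= Rabs_pos_eq // -!rpow_mul // ?Rmult_assoc; last lra.
  exact: grid_pair_rpow_bounds.
have hsum := big_embedding m n (fun a b => rpow (Rabs (INR a - INR b)) q) x y.
split; [apply: lqnorm_ge_mul | apply: lqnorm_le_mul]; rewrite ?hsum ?big_Rplus_mull; try lra;
  by apply: big_Rplus_le => j; have [] := hpair j.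
Qed.
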